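(* Let $\overline u,P^l\in\mathbb{R}^n$ be constant and let $(\overline\eta,\overline\omega,\overline V)$ with $\overline\eta\in\mathcal{R}(D^T)\cap(-\frac{\pi}{2},\frac{\pi}{2})^m$, $\overline V\in\mathbb{R}^n_{>0}$ be an equilibrium of the network dynamics with $u=\overline u$, i.e. $D^T\overline\omega=\mathbf{0}$, $\mathbf{0}=\overline u-D\Gamma(\overline V)\boldsymbol{\sin}(\overline\eta)-A\overline\omega-P^l$, $\mathbf{0}=-E(\overline\eta)\overline V+\overline E_{fd}$, and suppose $(\overline\eta,\overline V)$ satisfies condition $(\ast)$. Then the network dynamics with input $u$ and output $y=\omega$ is output strictly incrementally passive with respect to $(\overline\eta,\overline\omega,\overline V)$: the function $U=W_1(\omega,\overline\omega)+W_2(\eta,\overline\eta,V,\overline V)$, with $W_1=\frac12(\omega-\overline\omega)^TM(\omega-\overline\omega)$, satisfies along solutions \[ \dot U=-(y-\overline y)^TA(y-\overline y)-(\nabla_VW_2)^TT^{-1}\nabla_VW_2+(y-\overline y)^T(u-\overline u), \] where $\overline y=\overline\omega$.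
   Context: Standing setup (power network model). $\mathcal{G}=(\mathcal{V},\mathcal{E})$ is a connected undirected graph with node set $\{1,\dots,n\}$ and $m$ edges; each edge $k=\{i,j\}$ is given an arbitrary orientation, and $D\in\mathbb{R}^{n\times m}$ is the incidence matrix: $d_{ik}=+1$ if $i$ is the positive end of edge $k$, $-1$ if $i$ is the negative end, $0$ otherwise. $|D|$ denotes the matrix of entrywise absolute values of $D$. $\mathbf{1}_n$ is the all-ones vector. For each edge $k=\{i,j\}$ there is a susceptance $B_{ij}=B_{ji}>0$; each node has a self-susceptance $B_{ii}<0$ with $|B_{ii}|>\sum_{j\in\mathcal{N}_i}|B_{ij}|$ ($\mathcal{N}_i$ the neighbours of $i$ in $\mathcal{G}$), and reactances $X_{di}>X'_{di}>0$. For $V\in\mathbb{R}^n$, $\Gamma(V)=\mathrm{diag}(\gamma_1,\dots,\gamma_m)$ with $\gamma_k=V_iV_jB_{ij}$ for edge $k=\{i,j\}$. For $\eta\in\mathbb{R}^m$, $E(\eta)\in\mathbb{R}^{n\times n}$ is the symmetric matrix with $E_{ii}=\frac{1-B_{ii}(X_{di}-X'_{di})}{X_{di}-X'_{di}}$, $E_{ij}=-B_{ij}\cos(\eta_k)$ if $k=\{i,j\}$ is an edge, and $E_{ij}=0$ otherwise. $\boldsymbol{\sin}$, $\boldsymbol{\cos}$ act componentwise. $M,A,T$ are diagonal positive definite $n\times n$ matrices ($A=\mathrm{diag}(A_i)$), and $\overline E_{fd}\in\mathbb{R}^n$ is a constant vector. The network dynamics, with input $u\in\mathbb{R}^n$ (power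 generation) and demand $P^l$, are \[ \dot\eta=D^T\omega,\quad M\dot\omega=u-D\Gamma(V)\boldsymbol{\sin}(\eta)-A\omega-P^l,\quad T\dot V=-E(\eta)V+\overline E_{fd},\quad y=\omega, \] with state $(\eta,\omega,V)\in\mathbb{R}^m\times\mathbb{R}^n\times\mathbb{R}^n$. Condition $(\ast)$ on $(\overline\eta,\overline V)$: \[ E(\overline\eta)-\mathrm{diag}(\overline V)^{-1}|D|\Gamma(\overline V)\mathrm{diag}(\boldsymbol{\sin}(\overline\eta))\mathrm{diag}(\boldsymbol{\cos}(\overline\eta))^{-1}\mathrm{diag}(\boldsymbol{\sin}(\overline\eta))|D|^T\mathrm{diag}(\overline V)^{-1}>0. \] Storage function: $W_2(\eta,\overline\eta,V,\overline V)=-\mathbf{1}_m^T\Gamma(V)\boldsymbol{\cos}(\eta)+\mathbf{1}_m^T\Gamma(\overline V)\boldsymbol{\cos}(\overline\eta)-(\Gamma(\overline V)\boldsymbol{\sin}(\overline\eta))^T(\eta-\overline\eta)-\overline E_{fd}^T(V-\overline V)+\tfrac12V^TFV-\tfrac12\overline V^TF\overline V$, where $F$ is diagonal with $F_{ii}=\frac{1-B_{ii}(X_{di}-X'_{di})}{X_{di}-X'_{di}}$; note $\nabla_VW_2=E(\eta)V-\overline E_{fd}$. *)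

From Stdlib Require Import Reals Lra Lia Arith.
Open Scope R_scope.

(* Vectors in R^n are functions nat -> R, only indices < n matter. *)

Fixpoint rsum (n : nat) (f : nat -> R) : R :=
  match n with
  | O => 0
  | S p => rsum p f + f p
  end.

(* ---- graph: m edges, edge k oriented from src k (positive end) to dst k
   (negative end), nodes 0..n-1. ---- *)

Definition inc (src dst : nat -> nat) (i k : nat) : R :=
  if Nat.eqb i (src k) then 1 else if Nat.eqb i (dst k) then -1 else 0.

Definition absinc (src dst : nat -> nat) (i k : nat) : R := Rabs (inc src dst i k).

Definition joins (src dst : nat -> nat) (k i j : nat) : bool :=
  (Nat.eqb (src k) i && Nat.eqb (dst k) j) || (Nat.eqb (src k) j && Nat.eqb (dst k) i).

Definition adjacent (m : nat) (src dst : nat -> nat) (i j : nat) : Prop :=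
  exists k, (k < m)%nat /\ joins src dst k i j = true.

Inductive reach (m : nat) (src dst : nat -> nat) (i : nat) : nat -> Prop :=
  | reach_refl : reach m src dst i i
  | reach_step : forall j l, reach m src dst i j -> adjacent m src dst j l ->
                 reach m src dst i l.

Definition simple_connected_graph (n m : nat) (src dst : nat -> nat) : Prop :=
  (forall k, (k < m)%nat -> (src k < n)%nat /\ (dst k < n)%nat /\ src k <> dst k) /\
  (forall k1 k2, (k1 < m)%nat -> (k2 < m)%nat ->
     joins src dst k1 (src k2) (dst k2) = true -> k1 = k2) /\
  (forall i j, (i < n)%nat -> (j < n)%nat -> reach m src dst i j).

Definition Fdiag (B : nat -> nat -> R) (Xd Xd' : nat -> R) (i : nat) : R :=
  (1 - B i i * (Xd i - Xd' i)) / (Xd i - Xd' i).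

(* Gamma(V) = diag(gamma_k), gamma_k = V_i V_j B_ij for edge k = {i,j} *)
Definition gam (src dst : nat -> nat) (B : nat -> nat -> R) (V : nat -> R) (k : nat) : R :=
  V (src k) * V (dst k) * B (src k) (dst k).

Definition Emat (m : nat) (src dst : nat -> nat) (B : nat -> nat -> R)
  (Xd Xd' : nat -> R) (eta : nat -> R) (i j : nat) : R :=
  if Nat.eqb i j then Fdiag B Xd Xd' i
  else rsum m (fun k => if joins src dst k i j then - B i j * cos (eta k) else 0).

Definition DT (n : nat) (src dst : nat -> nat) (w : nat -> R) (k : nat) : R :=
  rsum n (fun i => inc src dst i k * w i).

Definition flow (m : nat) (src dst : nat -> nat) (B : nat -> nat -> R)
  (V eta : nat -> R) (i : nat) : R :=
  rsum m (fun k => inc src dst i k * gam src dst B V k * sin (eta k)).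

Definition EV (n m : nat) (src dst : nat -> nat) (B : nat -> nat -> R)
  (Xd Xd' : nat -> R) (eta V : nat -> R) (i : nat) : R :=
  rsum n (fun j => Emat m src dst B Xd Xd' eta i j * V j).

(* Condition (ast): the symmetric n x n matrix
   E(etab) - diag(Vb)^-1 |D| Gamma(Vb) diag(sin etab) diag(cos etab)^-1 diag(sin etab) |D|^T diag(Vb)^-1
   is positive definite. *)
Definition condQ (n m : nat) (src dst : nat -> nat) (B : nat -> nat -> R)
  (Xd Xd' : nat -> R) (etab Vb : nat -> R) (i j : nat) : R :=
  Emat m src dst B Xd Xd' etab i j
  - / Vb i * rsum m (fun k => absinc src dst i k * gam src dst B Vb k * sin (etab k)
                              * / cos (etab k) * sin (etab k) * absinc src dst j k) * / Vb j.

Definition pos_def (n : nat) (Q : nat -> nat -> R) : Prop :=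
  forall x : nat -> R, (exists i, (i < n)%nat /\ x i <> 0) ->
    rsum n (fun i => rsum n (fun j => x i * Q i j * x j)) > 0.

Definition W2 (n m : nat) (src dst : nat -> nat) (B : nat -> nat -> R)
  (Xd Xd' Efd : nat -> R) (eta etab V Vb : nat -> R) : R :=
  - rsum m (fun k => gam src dst B V k * cos (eta k))
  + rsum m (fun k => gam src dst B Vb k * cos (etab k))
  - rsum m (fun k => gam src dst B Vb k * sin (etab k) * (eta k - etab k))
  - rsum n (fun i => Efd i * (V i - Vb i))
  + / 2 * rsum n (fun i => Fdiag B Xd Xd' i * V i * V i)
  - / 2 * rsum n (fun i => Fdiag B Xd Xd' i * Vb i * Vb i).

Definition W1 (n : nat) (Mi : nat -> R) (w wb : nat -> R) : R :=
  / 2 * rsum n (fun i => Mi i * (w i - wb i) * (w i - wb i)).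

Definition gradVW2 (n m : nat) (src dst : nat -> nat) (B : nat -> nat -> R)
  (Xd Xd' Efd : nat -> R) (eta V : nat -> R) (i : nat) : R :=
  EV n m src dst B Xd Xd' eta V i - Efd i.

From Stdlib Require Import Reals Lra Psatz Lia Arith.
Open Scope R_scope.

(* Storage: at the equilibrium the node terms and the bilinear part of the edge terms of W2
   assemble into half the quadratic form of condition (ast) in V - Vb, once eta - etab is
   eliminated by completing a square on each edge. Being positive definite, that form is
   coercive, and on a small enough neighbourhood it dominates the higher-order edge remainders.
   Dissipation: by the chain rule the eta-derivative of W2 is the line-flow mismatch, which
   D^T wb = 0 turns into (w - wb)^T (flow - flow_b), cancelling against W1; the V-derivative
   contributes -(nabla_V W2)^T T^-1 nabla_V W2. *)

Lemma rsum_ext n f g : (forall i, (i < n)%nat -> f i = g i) -> rsum n f = rsum n g.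
Proof.
  induction n as [|n IH]; intros H; simpl; [reflexivity|].
  rewrite IH, H; auto with arith.
Qed.

Lemma rsum_plus n f g : rsum n (fun i => f i + g i) = rsum n f + rsum n g.
Proof. induction n as [|n IH]; simpl; [lra|rewrite IH; lra]. Qed.

Lemma rsum_minus n f g : rsum n (fun i => f i - g i) = rsum n f - rsum n g.
Proof. induction n as [|n IH]; simpl; [lra|rewrite IH; lra]. Qed.

Lemma rsum_mult_l n c f : rsum n (fun i => c * f i) = c * rsum n f.
Proof. induction n as [|n IH]; simpl; [lra|rewrite IH; lra]. Qed.

Lemma rsum_opp n f : rsum n (fun i => - f i) = - rsum n f.
Proof. induction n as [|n IH]; simpl; [lra|rewrite IH; lra]. Qed.

Lemma rsum_const n c : rsum n (fun _ => c) = INR n * c.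
Proof. induction n as [|n IH]; simpl rsum; [simpl; lra|rewrite IH, S_INR; ring]. Qed.

Lemma rsum_0 n f : (forall i, (i < n)%nat -> f i = 0) -> rsum n f = 0.
Proof. intros H. rewrite (rsum_ext n f (fun _ => 0)), rsum_const by auto. ring. Qed.

Lemma rsum_comm n m f :
  rsum n (fun i => rsum m (fun k => f i k)) = rsum m (fun k => rsum n (fun i => f i k)).
Proof.
  induction n as [|n IH]; simpl.
  - symmetry. now apply rsum_0.
  - now rewrite IH, <- rsum_plus.
Qed.

Lemma rsum_prod n f g :
  rsum n (fun i => rsum n (fun j => f i * g j)) = rsum n f * rsum n g.
Proof.
  transitivity (rsum n (fun i => f i * rsum n g)).
  - apply rsum_ext; intros i _. apply rsum_mult_l.
  - rewrite Rmult_comm, <- rsum_mult_l. apply rsum_ext; intros; ring.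
Qed.

Lemma rsum_eqb n a f : (a < n)%nat -> rsum n (fun i => if Nat.eqb i a then f i else 0) = f a.
Proof.
  induction n as [|n IH]; intros Ha; simpl; [lia|].
  destruct (Nat.eqb_spec n a) as [->|Hne].
  - rewrite rsum_0; [ring|]. intros i Hi. destruct (Nat.eqb_spec i a); [lia|auto].
  - rewrite IH by lia. ring.
Qed.

Lemma rsum_le n f g : (forall i, (i < n)%nat -> f i <= g i) -> rsum n f <= rsum n g.
Proof.
  induction n as [|n IH]; simpl; intros H; [lra|].
  apply Rplus_le_compat; [apply IH; auto with arith|apply H; lia].
Qed.

Lemma rsum_nonneg n f : (forall i, (i < n)%nat -> 0 <= f i) -> 0 <= rsum n f.
Proof. intros H. rewrite <- (rsum_0 n (fun _ => 0)) by auto. now apply rsum_le. Qed.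

Lemma rsum_term_le n f j :
  (forall i, (i < n)%nat -> 0 <= f i) -> (j < n)%nat -> f j <= rsum n f.
Proof.
  induction n as [|n IH]; simpl; intros H Hj; [lia|].
  assert (0 <= rsum n f) by (apply rsum_nonneg; auto with arith).
  destruct (Nat.eq_dec j n) as [->|Hne]; [lra|].
  assert (f j <= rsum n f) by (apply IH; [auto with arith|lia]).
  assert (0 <= f n) by (apply H; lia). lra.
Qed.

Ltac merge_rsums :=
  repeat (rewrite <- rsum_plus || rewrite <- rsum_minus || rewrite <- rsum_mult_l
          || rewrite <- rsum_opp).

Definition dot (n : nat) (x y : nat -> R) : R := rsum n (fun i => x i * y i).

Definition qform (n : nat) (Q : nat -> nat -> R) (x : nat -> R) : R :=
  rsum n (fun i => rsum n (fun j => x i * Q i j * x j)).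

Lemma dot_self_nonneg n x : 0 <= dot n x x.
Proof. apply rsum_nonneg; intros; nra. Qed.

(* Lagrange's identity: the defect in Cauchy-Schwarz is a sum of squares. *)
Lemma dot_Cauchy_Schwarz n x y : dot n x y * dot n x y <= dot n x x * dot n y y.
Proof.
  assert (Lagrange : rsum n (fun i => rsum n (fun j => (x i * y j - x j * y i) ^ 2))
                     = 2 * (dot n x x * dot n y y - dot n x y * dot n x y)).
  { transitivity (rsum n (fun i => rsum n (fun j => (x i * x i) * (y j * y j)))
                 + rsum n (fun i => rsum n (fun j => (y i * y i) * (x j * x j)))
                 - 2 * rsum n (fun i => rsum n (fun j => (x i * y i) * (x j * y j)))).
    - rewrite <- rsum_mult_l, <- rsum_plus, <- rsum_minus. apply rsum_ext; intros i _.
      rewrite <- rsum_mult_l, <- rsum_plus, <- rsum_minus. apply rsum_ext; intros; ring.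
    - rewrite !rsum_prod. unfold dot. ring. }
  assert (0 <= rsum n (fun i => rsum n (fun j => (x i * y j - x j * y i) ^ 2))).
  { apply rsum_nonneg; intros; apply rsum_nonneg; intros; apply pow2_ge_0. }
  lra.
Qed.

Lemma qform_ext n Q x y : (forall i, (i < n)%nat -> x i = y i) -> qform n Q x = qform n Q y.
Proof.
  intros H. apply rsum_ext; intros i Hi. apply rsum_ext; intros j Hj. now rewrite !H.
Qed.

Lemma qform_S n Q x :
  qform (S n) Q x =
  qform n Q x + x n * rsum n (fun j => (Q n j + Q j n) * x j) + Q n n * x n * x n.
Proof.
  unfold qform. simpl. rewrite rsum_plus, <- rsum_mult_l.
  assert (rsum n (fun j => x n * ((Q n j + Q j n) * x j))
          = rsum n (fun i => x i * Q i n * x n) + rsum n (fun j => x n * Q n j * x j)).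
  { rewrite <- rsum_plus. apply rsum_ext; intros; ring. }
  lra.
Qed.

Section Schur_complement.

Variables (n : nat) (Q : nat -> nat -> R).

Let a := Q n n.
Let b j := (Q n j + Q j n) / 2.

Definition schur_complement (i j : nat) : R := Q i j - b i * b j / a.

Hypothesis Ha : a <> 0.

Lemma qform_schur_complement x :
  qform (S n) Q x = qform n schur_complement x + a * (x n + dot n b x / a) ^ 2.
Proof.
  assert (Hrank1 : qform n (fun i j => b i * b j) x = dot n b x * dot n b x).
  { unfold qform, dot. rewrite <- rsum_prod. apply rsum_ext; intros.
    apply rsum_ext; intros; ring. }
  assert (Hschur : qform n schur_complement x = qform n Q x - dot n b x * dot n b x / a).
  { rewrite <- Hrank1.
    replace (qform n (fun i j => b i * b j) x / a) with (/ a * qform n (fun i j => b i * b j) x)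
      by (unfold Rdiv; ring).
    unfold qform. rewrite <- rsum_mult_l, <- rsum_minus.
    apply rsum_ext; intros i _. rewrite <- rsum_mult_l, <- rsum_minus.
    apply rsum_ext; intros. unfold schur_complement. field. exact Ha. }
  assert (Hb : rsum n (fun j => (Q n j + Q j n) * x j) = 2 * dot n b x).
  { unfold dot. rewrite <- rsum_mult_l. apply rsum_ext; intros. unfold b. field. }
  rewrite qform_S, Hschur, Hb. fold a. field. exact Ha.
Qed.

Lemma pos_def_schur_complement : pos_def (S n) Q -> pos_def n schur_complement.
Proof.
  intros HQ y [i [Hi Hyi]].
  set (x := fun j => if Nat.ltb j n then y j else - (dot n b y / a)).
  assert (Hxy : forall j, (j < n)%nat -> x j = y j).
  { intros j Hj. unfold x. now rewrite (proj2 (Nat.ltb_lt j n) Hj). }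
  assert (Hxn : x n + dot n b x / a = 0).
  { assert (dot n b x = dot n b y) as -> by (apply rsum_ext; intros; now rewrite Hxy).
    unfold x. rewrite Nat.ltb_irrefl. ring. }
  assert (Hpos : qform (S n) Q x > 0).
  { apply HQ. exists i. split; [lia|]. now rewrite Hxy. }
  rewrite qform_schur_complement, Hxn, (qform_ext n _ x y Hxy) in Hpos.
  change (qform n schur_complement y > 0). lra.
Qed.

End Schur_complement.

Lemma pos_def_diag n Q : pos_def (S n) Q -> Q n n > 0.
Proof.
  intros HQ.
  set (e := fun i => if Nat.eqb i n then 1 else 0).
  assert (He0 : forall j, (j < n)%nat -> e j = 0).
  { intros j Hj. unfold e. destruct (Nat.eqb_spec j n); [lia|auto]. }
  assert (Hen : e n = 1) by (unfold e; now rewrite Nat.eqb_refl).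
  assert (Hq : qform n Q e = 0).
  { rewrite (qform_ext n Q e (fun _ => 0)) by exact He0.
    apply rsum_0; intros; apply rsum_0; intros; ring. }
  assert (Hl : rsum n (fun j => (Q n j + Q j n) * e j) = 0).
  { apply rsum_0; intros j Hj. rewrite He0 by exact Hj. ring. }
  assert (Hpos : qform (S n) Q e > 0).
  { apply HQ. exists n. split; [lia|]. lra. }
  rewrite qform_S, Hq, Hl, Hen in Hpos. lra.
Qed.

(* Induction on the dimension via the Schur complement of the last diagonal entry. *)
Lemma pos_def_coercive n Q :
  pos_def n Q -> exists c, c > 0 /\ forall x, qform n Q x >= c * dot n x x.
Proof.
  revert Q. induction n as [|n IH]; intros Q HQ.
  { exists 1. split; [lra|]. intros x. unfold qform, dot. simpl. lra. }
  pose proof (pos_def_diag n Q HQ) as Ha.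
  set (a := Q n n) in *. set (b := fun j => (Q n j + Q j n) / 2).
  destruct (IH _ (pos_def_schur_complement n Q (Rgt_not_eq _ _ Ha) HQ)) as [c [Hc Hcoer]].
  set (k := 1 + 2 * dot n b b / (a * a)).
  assert (Hk : 1 <= k).
  { assert (0 <= dot n b b / (a * a))
      by (apply Rmult_le_pos; [apply dot_self_nonneg|left; apply Rinv_0_lt_compat; nra]).
    unfold k. lra. }
  exists (Rmin (c / k) (a / 2)). split.
  { apply Rmin_glb_lt; apply Rdiv_lt_0_compat; lra. }
  intros x. rewrite (qform_schur_complement n Q) by (apply Rgt_not_eq; exact Ha). fold a b.
  specialize (Hcoer x).
  set (y := dot n x x) in *. set (z := x n + dot n b x / a).
  assert (Hy : 0 <= y) by apply dot_self_nonneg.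
  assert (Hxn : x n * x n <= 2 * (z * z) + (k - 1) * y).
  { assert (Hbeta : (dot n b x / a) * (dot n b x / a) <= (k - 1) / 2 * y).
    { replace ((dot n b x / a) * (dot n b x / a)) with (dot n b x * dot n b x * / (a * a))
        by (field; lra).
      replace ((k - 1) / 2 * y) with (dot n b b * y * / (a * a)) by (unfold k; field; lra).
      apply Rmult_le_compat_r; [left; apply Rinv_0_lt_compat; nra|apply dot_Cauchy_Schwarz]. }
    replace (x n) with (z - dot n b x / a) by (unfold z; ring).
    pose proof (pow2_ge_0 (z + dot n b x / a)). nra. }
  change (dot (S n) x x) with (y + x n * x n).
  pose proof (Rmin_l (c / k) (a / 2)) as Hck. pose proof (Rmin_r (c / k) (a / 2)).
  set (c' := Rmin (c / k) (a / 2)) in *.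
  assert (c' * k <= c).
  { apply (Rmult_le_reg_r (/ k)); [apply Rinv_0_lt_compat; lra|].
    replace (c' * k * / k) with c' by (field; lra). exact Hck. }
  assert (0 < c') by (unfold c'; apply Rmin_glb_lt; apply Rdiv_lt_0_compat; lra).
  assert (c' * (x n * x n) <= c' * (2 * (z * z) + (k - 1) * y)) by (apply Rmult_le_compat_l; lra).
  assert (c' * k * y <= c * y) by (apply Rmult_le_compat_r; lra).
  assert (2 * c' * (z * z) <= a * (z * z)) by (apply Rmult_le_compat_r; [apply Rle_0_sqr|lra]).
  assert (z ^ 2 = z * z) by ring.
  lra.
Qed.

Lemma Rabs_le_between x y : Rabs x <= y -> - y <= x <= y.
Proof. unfold Rabs; destruct (Rcase_abs x); lra. Qed.

Lemma Rabs_sqr x : x * x = Rabs x * Rabs x.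
Proof. rewrite <- Rabs_mult. symmetry. apply Rabs_pos_eq, Rle_0_sqr. Qed.

Lemma Rabs_comb_le c s x y :
  Rabs c <= 1 -> Rabs s <= 1 -> Rabs (c * x + s * y) <= Rabs x + Rabs y.
Proof.
  intros Hc Hs. eapply Rle_trans; [apply Rabs_triang|]. rewrite !Rabs_mult.
  pose proof (Rabs_pos x). pose proof (Rabs_pos y).
  apply Rplus_le_compat.
  - rewrite <- (Rmult_1_l (Rabs x)) at 2. now apply Rmult_le_compat_r.
  - rewrite <- (Rmult_1_l (Rabs y)) at 2. now apply Rmult_le_compat_r.
Qed.

Lemma Rabs_cos_le_1 x : Rabs (cos x) <= 1.
Proof. apply Rabs_le, COS_bound. Qed.

Lemma Rabs_sin_le_1 x : Rabs (sin x) <= 1.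
Proof. apply Rabs_le, SIN_bound. Qed.

Lemma sin_cos_remainders_nonneg d : 0 <= d <= 1 ->
  Rabs (1 - cos d - d * d / 2) + Rabs (sin d - d) <= d * (d * d) /\
  Rabs (1 - cos d) <= d * d /\ Rabs (sin d) <= d.
Proof.
  intros Hd. pose proof PI2_1.
  assert (Hsin : d - d * d * d / 6 <= sin d <= d - d * d * d / 6 + d * d * d * d * d / 120).
  { replace (d - d * d * d / 6 + d * d * d * d * d / 120) with (sin_approx d (2 * (0 + 1)))
      by (unfold sin_approx, sin_term; simpl; field).
    replace (d - d * d * d / 6) with (sin_approx d (2 * 0 + 1))
      by (unfold sin_approx, sin_term; simpl; field).
    apply sin_bound; lra. }
  assert (Hcos : 1 - d * d / 2 <= cos d <= 1 - d * d / 2 + d * d * d * d / 24).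
  { replace (1 - d * d / 2 + d * d * d * d / 24) with (cos_approx d (2 * (0 + 1)))
      by (unfold cos_approx, cos_term; simpl; field).
    replace (1 - d * d / 2) with (cos_approx d (2 * 0 + 1))
      by (unfold cos_approx, cos_term; simpl; field).
    apply cos_bound; lra. }
  assert (0 <= d * d <= d) by nra.
  assert (0 <= d * d * d <= d * d) by nra.
  assert (0 <= d * d * d * d <= d * d * d) by nra.
  assert (0 <= d * d * d * d * d <= d * d * d * d) by nra.
  rewrite (Rabs_left1 (1 - cos d - d * d / 2)), (Rabs_left1 (sin d - d)) by lra.
  split; [lra|split; apply Rabs_le; lra].
Qed.

Lemma sin_cos_remainders d : Rabs d <= 1 ->
  Rabs (1 - cos d - d * d / 2) + Rabs (sin d - d) <= Rabs d * (d * d) /\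
  Rabs (1 - cos d) <= d * d /\ Rabs (sin d) <= Rabs d.
Proof.
  intros Hd.
  destruct (Rle_dec 0 d) as [Hpos|Hneg].
  - rewrite (Rabs_pos_eq d) in * by exact Hpos. apply sin_cos_remainders_nonneg. lra.
  - rewrite (Rabs_left d) in * by lra.
    destruct (sin_cos_remainders_nonneg (- d)) as [H1 [H2 H3]]; [lra|].
    rewrite cos_neg, sin_neg in *.
    replace (- sin d - - d) with (- (sin d - d)) in H1 by ring.
    replace (- d * - d) with (d * d) in * by ring.
    rewrite Rabs_Ropp in H1, H3. lra.
Qed.

Lemma cos_sin_comb_remainders c s d eps :
  Rabs c <= 1 -> Rabs s <= 1 -> Rabs d <= eps -> eps <= 1 ->
  Rabs (c * (1 - cos d - d * d / 2) + s * (sin d - d)) <= eps * (d * d) /\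
  Rabs (c * (1 - cos d) + s * (sin d - d)) <= 2 * (d * d) /\
  Rabs (c * (1 - cos d) + s * sin d) <= 2 * eps.
Proof.
  intros Hc Hs Hd He1.
  destruct (sin_cos_remainders d) as [T1 [T2 T3]]; [lra|].
  pose proof (Rabs_pos d). pose proof (Rabs_sqr d).
  pose proof (Rabs_comb_le c s (1 - cos d - d * d / 2) (sin d - d) Hc Hs).
  pose proof (Rabs_comb_le c s (1 - cos d) (sin d - d) Hc Hs).
  pose proof (Rabs_comb_le c s (1 - cos d) (sin d) Hc Hs).
  pose proof (Rabs_pos (1 - cos d - d * d / 2)).
  assert (Rabs d * (d * d) <= eps * (d * d)) by (apply Rmult_le_compat_r; nra).
  assert (Rabs d * (d * d) <= 1 * (d * d)) by (apply Rmult_le_compat_r; nra).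
  split; [lra|split; [lra|nra]].
Qed.

(* The edge term of W2 for an edge with end voltages Vs + vs, Vd + vd, minus its share of the
   quadratic form of condition (ast). *)
Definition edge_remainder (Vs Vd Bk eb e vs vd : R) : R :=
  - ((Vs + vs) * (Vd + vd) * Bk) * (cos e - cos eb) - Vs * Vd * Bk * sin eb * (e - eb)
  + / 2 * (Vs * Vd * Bk * sin eb * / cos eb * sin eb)
    * ((vs / Vs + vd / Vd) * (vs / Vs + vd / Vd)).

Section Edge_remainder.

Variables Vs Vd Bk eb : R.
Hypotheses (HVs : 0 < Vs) (HVd : 0 < Vd) (HBk : 0 < Bk) (Hcb : 0 < cos eb).

Let g := Vs * Vd * Bk.
Let K := g + 2 * Bk * (Vs + Vd) + Bk.
Let L := 4 * (sin eb / cos eb) * (sin eb / cos eb) * (/ (Vs * Vs) + / (Vd * Vd)).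

Lemma gamma_pos : 0 < g.
Proof. unfold g. repeat apply Rmult_lt_0_compat; assumption. Qed.

Lemma edge_remainder_decomp e vs vd :
  let d := e - eb in
  let p := vs / Vs + vd / Vd in
  let z := d + sin eb * p / cos eb in
  edge_remainder Vs Vd Bk eb e vs vd =
    / 2 * (g * cos eb) * (z * z)
    + g * (cos eb * (1 - cos d - d * d / 2) + sin eb * (sin d - d))
    + g * p * (cos eb * (1 - cos d) + sin eb * (sin d - d))
    + Bk * vs * vd * (cos eb * (1 - cos d) + sin eb * sin d).
Proof.
  intros d p z. unfold edge_remainder, z, p, g.
  replace e with (eb + d) at 1 by (unfold d; ring). rewrite cos_plus. fold d.
  field. lra.
Qed.

Lemma edge_remainder_ge e vs vd eps :
  eps <= 1 -> Rabs (e - eb) <= eps -> Rabs vs <= eps -> Rabs vd <= eps ->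
  let z := e - eb + sin eb * (vs / Vs + vd / Vd) / cos eb in
  / 2 * (g * cos eb) * (z * z) - eps * K * ((e - eb) * (e - eb) + (vs * vs + vd * vd))
  <= edge_remainder Vs Vd Bk eb e vs vd.
Proof.
  intros He1 Hd Hvs Hvd z. rewrite edge_remainder_decomp. fold z.
  set (d := e - eb) in *. set (p := vs / Vs + vd / Vd).
  destruct (cos_sin_comb_remainders (cos eb) (sin eb) d eps) as [Hcubic [Hquad Hlin]];
    auto using Rabs_cos_le_1, Rabs_sin_le_1.
  pose proof gamma_pos.
  assert (Hgp : Rabs (g * p) <= Bk * (Vs + Vd) * eps).
  { replace (g * p) with (Bk * (Vd * vs + Vs * vd)) by (unfold g, p; field; lra).
    rewrite Rabs_mult, (Rabs_pos_eq Bk), (Rmult_assoc Bk) by lra. apply Rmult_le_compat_l; [lra|].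
    eapply Rle_trans; [apply Rabs_triang|].
    rewrite !Rabs_mult, (Rabs_pos_eq Vs), (Rabs_pos_eq Vd) by lra. nra. }
  assert (Hvv : Rabs (vs * vd) <= / 2 * (vs * vs + vd * vd)).
  { rewrite Rabs_mult, (Rabs_sqr vs), (Rabs_sqr vd).
    pose proof (Rle_0_sqr (Rabs vs - Rabs vd)). unfold Rsqr in *. nra. }
  set (W := vs * vs + vd * vd) in *.
  assert (Heps : 0 <= eps) by (pose proof (Rabs_pos vs); lra).
  assert (HW : 0 <= W) by (unfold W; nra).
  assert (R1 : - (g * (eps * (d * d)))
               <= g * (cos eb * (1 - cos d - d * d / 2) + sin eb * (sin d - d))).
  { apply Rabs_le_between in Hcubic. rewrite Ropp_mult_distr_r.
    apply Rmult_le_compat_l; lra. }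
  assert (R2 : Rabs (g * p * (cos eb * (1 - cos d) + sin eb * (sin d - d)))
               <= Bk * (Vs + Vd) * eps * (2 * (d * d))).
  { rewrite Rabs_mult. apply Rmult_le_compat; auto using Rabs_pos. }
  assert (R3 : Rabs (Bk * vs * vd * (cos eb * (1 - cos d) + sin eb * sin d))
               <= Bk * (/ 2 * W) * (2 * eps)).
  { replace (Bk * vs * vd * (cos eb * (1 - cos d) + sin eb * sin d))
      with (Bk * (vs * vd * (cos eb * (1 - cos d) + sin eb * sin d))) by ring.
    rewrite Rabs_mult, (Rabs_pos_eq Bk), (Rmult_assoc Bk) by lra.
    apply Rmult_le_compat_l; [lra|]. rewrite Rabs_mult.
    apply Rmult_le_compat; auto using Rabs_pos. }
  apply Rabs_le_between in R2, R3.
  assert (Hslack : 0 <= eps * (Bk * (d * d) + (g + 2 * Bk * (Vs + Vd)) * W)).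
  { assert (0 <= Bk * (Vs + Vd)) by nra.
    apply Rmult_le_pos; [exact Heps|]. apply Rplus_le_le_0_compat; [nra|].
    apply Rmult_le_pos; lra. }
  unfold K. lra.
Qed.

Lemma edge_angle_sq_le e vs vd :
  let z := e - eb + sin eb * (vs / Vs + vd / Vd) / cos eb in
  (e - eb) * (e - eb) <= 2 * (z * z) + L * (vs * vs + vd * vd).
Proof.
  intros z. set (t := sin eb / cos eb). set (p := vs / Vs + vd / Vd).
  assert (Hz : e - eb = z - t * p) by (unfold z, t, p; field; lra).
  assert (Hp : p * p <= 2 * (/ (Vs * Vs) * (vs * vs) + / (Vd * Vd) * (vd * vd))).
  { replace (/ (Vs * Vs) * (vs * vs)) with ((vs / Vs) * (vs / Vs)) by (field; lra).
    replace (/ (Vd * Vd) * (vd * vd)) with ((vd / Vd) * (vd / Vd)) by (field; lra).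
    pose proof (Rle_0_sqr (vs / Vs - vd / Vd)). unfold p, Rsqr in *. lra. }
  assert (HVs2 : 0 < / (Vs * Vs)) by (apply Rinv_0_lt_compat; nra).
  assert (HVd2 : 0 < / (Vd * Vd)) by (apply Rinv_0_lt_compat; nra).
  assert (Htp : (t * p) * (t * p)
                <= (t * t) * (2 * (/ (Vs * Vs) * (vs * vs) + / (Vd * Vd) * (vd * vd)))).
  { replace ((t * p) * (t * p)) with ((t * t) * (p * p)) by ring.
    apply Rmult_le_compat_l; [apply Rle_0_sqr|lra]. }
  assert (Hcross : / (Vs * Vs) * (vs * vs) + / (Vd * Vd) * (vd * vd)
                   <= (/ (Vs * Vs) + / (Vd * Vd)) * (vs * vs + vd * vd)).
  { pose proof (Rle_0_sqr vs). pose proof (Rle_0_sqr vd). unfold Rsqr in *. nra. }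
  assert (0 <= t * t) by apply Rle_0_sqr.
  pose proof (Rle_0_sqr (z + t * p)). unfold Rsqr in *. rewrite Hz. unfold L. fold t. nra.
Qed.

Lemma edge_remainder_lower_bound mu : 0 < mu ->
  exists delta, 0 < delta /\ forall e vs vd,
    Rabs (e - eb) <= delta -> Rabs vs <= delta -> Rabs vd <= delta ->
    - mu * (vs * vs + vd * vd) <= edge_remainder Vs Vd Bk eb e vs vd.
Proof.
  intros Hmu. pose proof gamma_pos as Hg.
  set (a := g * cos eb).
  assert (Ha : 0 < a) by (apply Rmult_lt_0_compat; assumption).
  assert (HK : 0 < K) by (unfold K; nra).
  assert (HL : 0 <= L).
  { unfold L. assert (0 < / (Vs * Vs)) by (apply Rinv_0_lt_compat; nra).
    assert (0 < / (Vd * Vd)) by (apply Rinv_0_lt_compat; nra).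
    pose proof (Rle_0_sqr (sin eb / cos eb)). unfold Rsqr in *. nra. }
  set (delta := Rmin 1 (Rmin (a / (4 * K)) (mu / (K * (L + 1))))).
  assert (Hd1 : delta <= 1) by apply Rmin_l.
  assert (HdK : delta * K <= a / 4).
  { apply (Rmult_le_reg_r (/ K)); [apply Rinv_0_lt_compat; lra|].
    replace (delta * K * / K) with delta by (field; lra).
    replace (a / 4 * / K) with (a / (4 * K)) by (field; lra).
    eapply Rle_trans; [apply Rmin_r|apply Rmin_l]. }
  assert (HdKL : delta * K * (L + 1) <= mu).
  { apply (Rmult_le_reg_r (/ (K * (L + 1)))); [apply Rinv_0_lt_compat; nra|].
    replace (delta * K * (L + 1) * / (K * (L + 1))) with delta by (field; lra).
    eapply Rle_trans; [apply Rmin_r|apply Rmin_r]. }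
  assert (Hdelta : 0 < delta).
  { repeat apply Rmin_glb_lt; try lra; apply Rdiv_lt_0_compat; nra. }
  exists delta. split; [exact Hdelta|]. intros e vs vd Hd Hvs Hvd.
  pose proof (edge_remainder_ge e vs vd delta Hd1 Hd Hvs Hvd) as Hge.
  pose proof (edge_angle_sq_le e vs vd) as Hangle. cbv zeta in Hge, Hangle.
  set (z := e - eb + sin eb * (vs / Vs + vd / Vd) / cos eb) in *.
  set (W := vs * vs + vd * vd) in *. fold a in Hge.
  assert (0 <= W) by (unfold W; nra). assert (0 <= z * z) by apply Rle_0_sqr.
  assert (delta * K * ((e - eb) * (e - eb) + W) <= delta * K * (2 * (z * z) + L * W + W))
    by (apply Rmult_le_compat_l; nra).
  assert (delta * K * (L + 1) * W <= mu * W) by (apply Rmult_le_compat_r; lra).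
  assert (delta * K * (2 * (z * z)) <= a / 4 * (2 * (z * z))) by (apply Rmult_le_compat_r; lra).
  lra.
Qed.

End Edge_remainder.

Lemma rsum_mult_flow n m src dst B V eta x :
  rsum n (fun i => x i * flow m src dst B V eta i) =
  rsum m (fun k => gam src dst B V k * sin (eta k) * DT n src dst x k).
Proof.
  unfold flow, DT.
  rewrite (rsum_ext n _ (fun i => rsum m (fun k =>
             gam src dst B V k * sin (eta k) * (inc src dst i k * x i))))
    by (intros; rewrite <- rsum_mult_l; apply rsum_ext; intros; ring).
  rewrite rsum_comm. apply rsum_ext; intros. now rewrite rsum_mult_l.
Qed.

Lemma DT_minus n src dst x y k :
  DT n src dst (fun i => x i - y i) k = DT n src dst x k - DT n src dst y k.
Proof. unfold DT. rewrite <- rsum_minus. apply rsum_ext; intros; ring. Qed.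

Section Graph_sums.

Variables (n m : nat) (src dst : nat -> nat).
Hypothesis Hedge : forall k, (k < m)%nat -> (src k < n)%nat /\ (dst k < n)%nat /\ src k <> dst k.

Lemma joins_indicator k i j (G : R) : (k < m)%nat ->
  (if joins src dst k i j then G else 0) =
  (if Nat.eqb i (src k) then (if Nat.eqb j (dst k) then G else 0) else 0) +
  (if Nat.eqb i (dst k) then (if Nat.eqb j (src k) then G else 0) else 0).
Proof.
  intros Hk. destruct (Hedge k Hk) as [_ [_ Hne]]. unfold joins.
  destruct (Nat.eqb_spec (src k) i), (Nat.eqb_spec (dst k) j), (Nat.eqb_spec (src k) j),
    (Nat.eqb_spec (dst k) i), (Nat.eqb_spec i (src k)), (Nat.eqb_spec j (dst k)),
    (Nat.eqb_spec i (dst k)), (Nat.eqb_spec j (src k)); simpl; lia || lra.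
Qed.

Lemma rsum2_joins k (G : nat -> nat -> R) : (k < m)%nat ->
  rsum n (fun i => rsum n (fun j => if joins src dst k i j then G i j else 0)) =
  G (src k) (dst k) + G (dst k) (src k).
Proof.
  intros Hk. destruct (Hedge k Hk) as [Hs [Hd _]].
  assert (Hpoint : forall a b, (a < n)%nat -> (b < n)%nat ->
    rsum n (fun i => rsum n (fun j =>
      if Nat.eqb i a then (if Nat.eqb j b then G i j else 0) else 0)) = G a b).
  { intros a b Ha Hb.
    rewrite (rsum_ext n _ (fun i => if Nat.eqb i a then
               rsum n (fun j => if Nat.eqb j b then G i j else 0) else 0)).
    - rewrite rsum_eqb by exact Ha. now apply rsum_eqb.
    - intros i _. destruct (Nat.eqb i a); [reflexivity|now apply rsum_0]. }
  rewrite <- (Hpoint (src k) (dst k)), <- (Hpoint (dst k) (src k)) by assumption.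
  rewrite <- rsum_plus. apply rsum_ext; intros i _.
  rewrite <- rsum_plus. apply rsum_ext; intros j _. now apply joins_indicator.
Qed.

Lemma rsum_absinc k y : (k < m)%nat ->
  rsum n (fun i => absinc src dst i k * y i) = y (src k) + y (dst k).
Proof.
  intros Hk. destruct (Hedge k Hk) as [Hs [Hd Hne]].
  rewrite (rsum_ext n _ (fun i => (if Nat.eqb i (src k) then y i else 0)
                                  + (if Nat.eqb i (dst k) then y i else 0))).
  - now rewrite rsum_plus, !rsum_eqb.
  - intros i _. unfold absinc, inc.
    destruct (Nat.eqb_spec i (src k)), (Nat.eqb_spec i (dst k)); try lia;
      unfold Rabs; destruct Rcase_abs; lra.
Qed.

Lemma Emat_diag_offdiag B Xd Xd' eta i j :
  Emat m src dst B Xd Xd' eta i j =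
  (if Nat.eqb i j then Fdiag B Xd Xd' i else 0) +
  rsum m (fun k => if joins src dst k i j then - B i j * cos (eta k) else 0).
Proof.
  unfold Emat. destruct (Nat.eqb_spec i j) as [<-|]; [|ring].
  rewrite rsum_0; [ring|]. intros k Hk. destruct (Hedge k Hk) as [_ [_ Hne]].
  unfold joins.
  destruct (Nat.eqb_spec (src k) i), (Nat.eqb_spec (dst k) i); simpl; lia || reflexivity.
Qed.

Lemma rsum_mult_EV B Xd Xd' eta x y :
  (forall k, (k < m)%nat -> B (src k) (dst k) = B (dst k) (src k)) ->
  rsum n (fun i => x i * EV n m src dst B Xd Xd' eta y i) =
  rsum n (fun i => Fdiag B Xd Xd' i * x i * y i) -
  rsum m (fun k => B (src k) (dst k) * cos (eta k)
                   * (x (src k) * y (dst k) + x (dst k) * y (src k))).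
Proof.
  intros HB. unfold EV.
  set (G k i j := if joins src dst k i j then x i * (- B i j * cos (eta k)) * y j else 0).
  rewrite (rsum_ext n _ (fun i =>
             rsum n (fun j => if Nat.eqb j i then Fdiag B Xd Xd' i * x i * y i else 0)
             + rsum n (fun j => rsum m (fun k => G k i j)))).
  2:{ intros i _. rewrite <- rsum_mult_l, <- rsum_plus. apply rsum_ext; intros j _.
      assert (rsum m (fun k => G k i j) = x i * y j
                * rsum m (fun k => if joins src dst k i j then - B i j * cos (eta k) else 0)) as ->.
      { rewrite <- rsum_mult_l. apply rsum_ext; intros k _.
        unfold G. destruct (joins src dst k i j); ring. }
      rewrite Emat_diag_offdiag, Nat.eqb_sym. destruct (Nat.eqb_spec j i) as [->|]; ring. }
  rewrite rsum_plus, (rsum_ext n _ (fun i => Fdiag B Xd Xd' i * x i * y i))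
    by (intros; now apply rsum_eqb).
  rewrite (rsum_ext n (fun i => rsum n _) (fun i => rsum m (fun k => rsum n (fun j => G k i j))))
    by (intros; apply rsum_comm).
  rewrite rsum_comm. unfold Rminus. rewrite <- rsum_opp. f_equal. apply rsum_ext; intros k Hk.
  unfold G. rewrite (rsum2_joins k (fun i j => x i * (- B i j * cos (eta k)) * y j)) by exact Hk.
  rewrite <- (HB k Hk). ring.
Qed.

Lemma qform_condQ B Xd Xd' etab Vb v :
  qform n (condQ n m src dst B Xd Xd' etab Vb) v =
  rsum n (fun i => v i * EV n m src dst B Xd Xd' etab v i) -
  rsum m (fun k => gam src dst B Vb k * sin (etab k) * / cos (etab k) * sin (etab k)
    * ((v (src k) / Vb (src k) + v (dst k) / Vb (dst k))
       * (v (src k) / Vb (src k) + v (dst k) / Vb (dst k)))).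
Proof.
  set (c k := gam src dst B Vb k * sin (etab k) * / cos (etab k) * sin (etab k)).
  set (a i k := absinc src dst i k * (v i / Vb i)).
  assert (Hrank : rsum n (fun i => rsum n (fun j => rsum m (fun k => a i k * c k * a j k))) =
                  rsum m (fun k => c k * (rsum n (fun i => a i k) * rsum n (fun j => a j k)))).
  { rewrite (rsum_ext n _ (fun i => rsum m (fun k => rsum n (fun j => a i k * c k * a j k))))
      by (intros; apply rsum_comm).
    rewrite rsum_comm. apply rsum_ext; intros k _.
    rewrite <- rsum_prod, <- rsum_mult_l. apply rsum_ext; intros i _.
    rewrite <- rsum_mult_l. apply rsum_ext; intros; ring. }
  assert (Hsplit : qform n (condQ n m src dst B Xd Xd' etab Vb) v =
    rsum n (fun i => v i * EV n m src dst B Xd Xd' etab v i) -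
    rsum n (fun i => rsum n (fun j => rsum m (fun k => a i k * c k * a j k)))).
  { unfold qform, condQ, EV. rewrite <- rsum_minus. apply rsum_ext; intros i _.
    rewrite <- rsum_mult_l, <- rsum_minus. apply rsum_ext; intros j _.
    assert (rsum m (fun k => a i k * c k * a j k) =
            v i / Vb i * (v j / Vb j) * rsum m (fun k => absinc src dst i k * gam src dst B Vb k
              * sin (etab k) * / cos (etab k) * sin (etab k) * absinc src dst j k)) as ->.
    { rewrite <- rsum_mult_l. apply rsum_ext; intros. unfold a, c. ring. }
    unfold Rdiv. ring. }
  rewrite Hsplit, Hrank. f_equal. apply rsum_ext; intros k Hk.
  unfold a. rewrite !rsum_absinc by exact Hk. unfold c. ring.
Qed.

End Graph_sums.

Lemma W2_decomp n m src dst B Xd Xd' Efd eta etab V Vb :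
  (forall k, (k < m)%nat -> (src k < n)%nat /\ (dst k < n)%nat /\ src k <> dst k) ->
  (forall k, (k < m)%nat -> B (src k) (dst k) = B (dst k) (src k)) ->
  (forall i, (i < n)%nat -> 0 = - EV n m src dst B Xd Xd' etab Vb i + Efd i) ->
  W2 n m src dst B Xd Xd' Efd eta etab V Vb =
  / 2 * qform n (condQ n m src dst B Xd Xd' etab Vb) (fun i => V i - Vb i) +
  rsum m (fun k => edge_remainder (Vb (src k)) (Vb (dst k)) (B (src k) (dst k)) (etab k)
                     (eta k) (V (src k) - Vb (src k)) (V (dst k) - Vb (dst k))).
Proof.
  intros Hedge HBs Heq3.
  set (v i := V i - Vb i). set (F := Fdiag B Xd Xd').
  set (Bc k := B (src k) (dst k) * cos (etab k)).
  assert (Hq := qform_condQ n m src dst Hedge B Xd Xd' etab Vb v).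
  rewrite (rsum_mult_EV n m src dst Hedge B Xd Xd' etab v v HBs) in Hq.
  assert (HE : rsum n (fun i => Efd i * v i) =
               rsum n (fun i => F i * v i * Vb i)
               - rsum m (fun k => Bc k * (v (src k) * Vb (dst k) + v (dst k) * Vb (src k)))).
  { transitivity (rsum n (fun i => v i * EV n m src dst B Xd Xd' etab Vb i)).
    - apply rsum_ext; intros i Hi. pose proof (Heq3 i Hi). rewrite (Rmult_comm (v i)).
      f_equal. lra.
    - apply (rsum_mult_EV n m src dst Hedge B Xd Xd' etab v Vb HBs). }
  assert (Hnode : / 2 * rsum n (fun i => F i * V i * V i)
                  - / 2 * rsum n (fun i => F i * Vb i * Vb i)
                  - rsum n (fun i => F i * v i * Vb i) = / 2 * rsum n (fun i => F i * v i * v i)).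
  { merge_rsums. apply rsum_ext; intros. unfold v. field. }
  assert (Hedges :
    - rsum m (fun k => gam src dst B V k * cos (eta k))
    + rsum m (fun k => gam src dst B Vb k * cos (etab k))
    - rsum m (fun k => gam src dst B Vb k * sin (etab k) * (eta k - etab k))
    + rsum m (fun k => Bc k * (v (src k) * Vb (dst k) + v (dst k) * Vb (src k)))
    + / 2 * rsum m (fun k => Bc k * (v (src k) * v (dst k) + v (dst k) * v (src k)))
    + / 2 * rsum m (fun k => gam src dst B Vb k * sin (etab k) * / cos (etab k) * sin (etab k)
        * ((v (src k) / Vb (src k) + v (dst k) / Vb (dst k))
           * (v (src k) / Vb (src k) + v (dst k) / Vb (dst k))))
    = rsum m (fun k => edge_remainder (Vb (src k)) (Vb (dst k)) (B (src k) (dst k)) (etab k)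
                         (eta k) (v (src k)) (v (dst k)))).
  { merge_rsums. apply rsum_ext; intros.
    unfold edge_remainder, gam, Bc, v. lra. }
  unfold v, Bc, F in *. cbv beta in *. unfold W2. lra.
Qed.

Lemma pos_bound_uniform m (P : nat -> R -> Prop) :
  (forall k d d', 0 < d' <= d -> P k d -> P k d') ->
  (forall k, (k < m)%nat -> exists d, 0 < d /\ P k d) ->
  exists d, 0 < d /\ forall k, (k < m)%nat -> P k d.
Proof.
  intros Hmono. induction m as [|m IH]; intros Hex.
  { exists 1. split; [lra|]. intros k Hk. lia. }
  destruct IH as [d1 [Hd1 H1]]; [intros k Hk; apply Hex; lia|].
  destruct (Hex m) as [d2 [Hd2 H2]]; [lia|].
  exists (Rmin d1 d2). split; [now apply Rmin_glb_lt|].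
  intros k Hk. destruct (Nat.eq_dec k m) as [->|Hne].
  - apply (Hmono m d2); [split; [now apply Rmin_glb_lt|apply Rmin_r]|exact H2].
  - apply (Hmono k d1); [split; [now apply Rmin_glb_lt|apply Rmin_l]|apply H1; lia].
Qed.

Lemma rsum_edge_sq_le n m (src dst : nat -> nat) v :
  (forall k, (k < m)%nat -> (src k < n)%nat /\ (dst k < n)%nat) ->
  rsum m (fun k => v (src k) * v (src k) + v (dst k) * v (dst k)) <= 2 * INR m * dot n v v.
Proof.
  intros Hedge.
  assert (Hterm : forall j, (j < n)%nat -> v j * v j <= dot n v v)
    by (intros; apply (rsum_term_le n (fun i => v i * v i)); [intros; nra|assumption]).
  replace (2 * INR m * dot n v v) with (INR m * (2 * dot n v v)) by ring.
  rewrite <- rsum_const. apply rsum_le; intros k Hk.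
  destruct (Hedge k Hk) as [Hs Hd]. pose proof (Hterm _ Hs). pose proof (Hterm _ Hd). lra.
Qed.

Lemma W2_nonneg_near_equilibrium n m src dst B Xd Xd' Efd etab Vb :
  (forall k, (k < m)%nat -> (src k < n)%nat /\ (dst k < n)%nat /\ src k <> dst k) ->
  (forall k, (k < m)%nat -> B (src k) (dst k) = B (dst k) (src k) /\ B (src k) (dst k) > 0) ->
  (forall k, (k < m)%nat -> - (PI / 2) < etab k < PI / 2) ->
  (forall i, (i < n)%nat -> Vb i > 0) ->
  (forall i, (i < n)%nat -> 0 = - EV n m src dst B Xd Xd' etab Vb i + Efd i) ->
  pos_def n (condQ n m src dst B Xd Xd' etab Vb) ->
  exists eps, eps > 0 /\ forall eta V : nat -> R,
    (forall k, (k < m)%nat -> Rabs (eta k - etab k) < eps) ->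
    (forall i, (i < n)%nat -> Rabs (V i - Vb i) < eps) ->
    W2 n m src dst B Xd Xd' Efd eta etab V Vb >= 0.
Proof.
  intros Hedge HB Hetab HVb Heq3 Hast.
  destruct (pos_def_coercive n _ Hast) as [c [Hc Hcoer]].
  pose proof (pos_INR m) as Hm.
  set (mu := c / (4 * (INR m + 1))).
  assert (Hmu : 0 < mu) by (apply Rdiv_lt_0_compat; lra).
  assert (Hmu_m : mu * (2 * INR m) <= c / 2).
  { unfold mu. apply (Rmult_le_reg_r (4 * (INR m + 1))); [lra|].
    replace (c / (4 * (INR m + 1)) * (2 * INR m) * (4 * (INR m + 1))) with (c * (2 * INR m))
      by (field; lra). nra. }
  set (P k delta := forall e vs vd,
      Rabs (e - etab k) <= delta -> Rabs vs <= delta -> Rabs vd <= delta ->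
      - mu * (vs * vs + vd * vd) <=
      edge_remainder (Vb (src k)) (Vb (dst k)) (B (src k) (dst k)) (etab k) e vs vd).
  assert (Hmono : forall k d d', 0 < d' <= d -> P k d -> P k d').
  { intros k d d' Hd' H e vs vd ? ? ?. apply H; lra. }
  assert (Hex : forall k, (k < m)%nat -> exists d, 0 < d /\ P k d).
  { intros k Hk. destruct (Hedge k Hk) as [Hs [Hd _]]. destruct (HB k Hk) as [_ HBk].
    destruct (Hetab k Hk).
    apply edge_remainder_lower_bound;
      [apply HVb; exact Hs|apply HVb; exact Hd|exact HBk|apply cos_gt_0; lra|exact Hmu]. }
  destruct (pos_bound_uniform m P Hmono Hex) as [eps [Heps Hedge_bound]].
  exists eps. split; [exact Heps|]. intros eta V Heta HV.
  rewrite (W2_decomp n m src dst B Xd Xd' Efd eta etab V Vb Hedge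
             (fun k Hk => proj1 (HB k Hk)) Heq3).
  set (v i := V i - Vb i). specialize (Hcoer v).
  assert (Hedges : - mu * rsum m (fun k => v (src k) * v (src k) + v (dst k) * v (dst k)) <=
    rsum m (fun k => edge_remainder (Vb (src k)) (Vb (dst k)) (B (src k) (dst k)) (etab k)
                       (eta k) (V (src k) - Vb (src k)) (V (dst k) - Vb (dst k)))).
  { rewrite <- rsum_mult_l. apply rsum_le; intros k Hk. destruct (Hedge k Hk) as [Hs [Hd _]].
    apply Hedge_bound; [exact Hk|left..];
      [apply Heta; exact Hk|apply HV; exact Hs|apply HV; exact Hd]. }
  assert (Hsq := rsum_edge_sq_le n m src dst v
                   (fun k Hk => conj (proj1 (Hedge k Hk)) (proj1 (proj2 (Hedge k Hk))))).
  pose proof (dot_self_nonneg n v).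
  assert (mu * rsum m (fun k => v (src k) * v (src k) + v (dst k) * v (dst k))
          <= mu * (2 * INR m) * dot n v v).
  { rewrite Rmult_assoc. apply Rmult_le_compat_l; [lra|]. apply Hsq. }
  assert (mu * (2 * INR m) * dot n v v <= c / 2 * dot n v v) by (apply Rmult_le_compat_r; lra).
  lra.
Qed.

Lemma derivable_pt_lim_value f x l l' :
  derivable_pt_lim f x l -> l = l' -> derivable_pt_lim f x l'.
Proof. now intros H <-. Qed.

Lemma derivable_pt_lim_rsum n (f : nat -> R -> R) d t :
  (forall i, (i < n)%nat -> derivable_pt_lim (f i) t (d i)) ->
  derivable_pt_lim (fun s => rsum n (fun i => f i s)) t (rsum n d).
Proof.
  induction n as [|n IH]; intros H; simpl.
  - apply derivable_pt_lim_const.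
  - apply derivable_pt_lim_plus; [apply IH; auto with arith|apply H; lia].
Qed.

Ltac derive :=
  eapply derivable_pt_lim_value;
  [repeat first [ eassumption
                | apply derivable_pt_lim_const
                | apply derivable_pt_lim_plus
                | apply derivable_pt_lim_minus
                | apply derivable_pt_lim_opp
                | apply derivable_pt_lim_mult
                | apply (derivable_pt_lim_comp _ cos); [|apply derivable_pt_lim_cos] ]
  |cbv beta].

Lemma derivable_pt_lim_W1 n Mi wb (w : R -> nat -> R) w' t :
  (forall i, (i < n)%nat -> derivable_pt_lim (fun s => w s i) t (w' i)) ->
  derivable_pt_lim (fun s => W1 n Mi (w s) wb) t
    (rsum n (fun i => Mi i * (w t i - wb i) * w' i)).
Proof.
  intros Hw. unfold W1. derive.
  - apply (derivable_pt_lim_rsum n (fun i s => Mi i * (w s i - wb i) * (w s i - wb i))).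
    intros i Hi. pose proof (Hw i Hi). derive. reflexivity.
  - merge_rsums. apply rsum_ext; intros. field.
Qed.

Lemma derivable_pt_lim_W2 n m src dst B Xd Xd' Efd etab Vb (eta V : R -> nat -> R) eta' V' t :
  (forall k, (k < m)%nat -> (src k < n)%nat /\ (dst k < n)%nat /\ src k <> dst k) ->
  (forall k, (k < m)%nat -> B (src k) (dst k) = B (dst k) (src k)) ->
  (forall k, (k < m)%nat -> derivable_pt_lim (fun s => eta s k) t (eta' k)) ->
  (forall i, (i < n)%nat -> derivable_pt_lim (fun s => V s i) t (V' i)) ->
  derivable_pt_lim (fun s => W2 n m src dst B Xd Xd' Efd (eta s) etab (V s) Vb) t
    (rsum m (fun k => (gam src dst B (V t) k * sin (eta t k) - gam src dst B Vb k * sin (etab k))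
                      * eta' k)
     + rsum n (fun i => gradVW2 n m src dst B Xd Xd' Efd (eta t) (V t) i * V' i)).
Proof.
  intros Hedge HBs Heta HV.
  set (F := Fdiag B Xd Xd').
  set (dgam k := B (src k) (dst k) * (V' (src k) * V t (dst k) + V' (dst k) * V t (src k))).
  assert (Hcos : derivable_pt_lim
    (fun s => rsum m (fun k => gam src dst B (V s) k * cos (eta s k))) t
    (rsum m (fun k => dgam k * cos (eta t k) - gam src dst B (V t) k * sin (eta t k) * eta' k))).
  { apply (derivable_pt_lim_rsum m (fun k s => gam src dst B (V s) k * cos (eta s k))).
    intros k Hk. destruct (Hedge k Hk) as [Hs [Hd _]].
    pose proof (HV _ Hs). pose proof (HV _ Hd). pose proof (Heta k Hk).
    unfold gam. derive. unfold dgam. ring. }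
  assert (Hlin : derivable_pt_lim
    (fun s => rsum m (fun k => gam src dst B Vb k * sin (etab k) * (eta s k - etab k))) t
    (rsum m (fun k => gam src dst B Vb k * sin (etab k) * eta' k))).
  { apply (derivable_pt_lim_rsum m
             (fun k s => gam src dst B Vb k * sin (etab k) * (eta s k - etab k))).
    intros k Hk. pose proof (Heta k Hk). derive. ring. }
  assert (HEfd : derivable_pt_lim (fun s => rsum n (fun i => Efd i * (V s i - Vb i))) t
    (rsum n (fun i => Efd i * V' i))).
  { apply (derivable_pt_lim_rsum n (fun i s => Efd i * (V s i - Vb i))).
    intros i Hi. pose proof (HV i Hi). derive. ring. }
  assert (HF : derivable_pt_lim (fun s => rsum n (fun i => F i * V s i * V s i)) t
    (rsum n (fun i => 2 * (F i * V' i * V t i)))).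
  { apply (derivable_pt_lim_rsum n (fun i s => F i * V s i * V s i)).
    intros i Hi. pose proof (HV i Hi). derive. ring. }
  assert (HEV := rsum_mult_EV n m src dst Hedge B Xd Xd' (eta t) V' (V t) HBs). fold F in HEV.
  assert (Hgrad : rsum n (fun i => gradVW2 n m src dst B Xd Xd' Efd (eta t) (V t) i * V' i) =
    rsum n (fun i => V' i * EV n m src dst B Xd Xd' (eta t) (V t) i)
    - rsum n (fun i => Efd i * V' i))
    by (merge_rsums; apply rsum_ext; intros; unfold gradVW2; ring).
  assert (Hm :
    rsum m (fun k => dgam k * cos (eta t k) - gam src dst B (V t) k * sin (eta t k) * eta' k)
    = rsum m (fun k => B (src k) (dst k) * cos (eta t k)
                       * (V' (src k) * V t (dst k) + V' (dst k) * V t (src k)))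
      - rsum m (fun k => (gam src dst B (V t) k * sin (eta t k)
                          - gam src dst B Vb k * sin (etab k)) * eta' k)
      - rsum m (fun k => gam src dst B Vb k * sin (etab k) * eta' k))
    by (merge_rsums; apply rsum_ext; intros; unfold dgam; ring).
  assert (Hn : rsum n (fun i => 2 * (F i * V' i * V t i))
               = 2 * rsum n (fun i => F i * V' i * V t i)) by apply rsum_mult_l.
  unfold W2. fold F. derive. rewrite Hgrad, HEV, Hm, Hn. lra.
Qed.

Lemma derivable_pt_lim_storage n m src dst B Xd Xd' Mi Ai Ti Efd ub Pl etab wb Vb
  (u : nat -> R) (eta w V : R -> nat -> R) t :
  (forall k, (k < m)%nat -> (src k < n)%nat /\ (dst k < n)%nat /\ src k <> dst k) ->
  (forall k, (k < m)%nat -> B (src k) (dst k) = B (dst k) (src k)) ->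
  (forall i, (i < n)%nat -> Mi i > 0) ->
  (forall k, (k < m)%nat -> DT n src dst wb k = 0) ->
  (forall i, (i < n)%nat -> 0 = ub i - flow m src dst B Vb etab i - Ai i * wb i - Pl i) ->
  (forall k, (k < m)%nat -> derivable_pt_lim (fun s => eta s k) t (DT n src dst (w t) k)) ->
  (forall i, (i < n)%nat -> derivable_pt_lim (fun s => w s i) t
     (/ Mi i * (u i - flow m src dst B (V t) (eta t) i - Ai i * w t i - Pl i))) ->
  (forall i, (i < n)%nat -> derivable_pt_lim (fun s => V s i) t
     (/ Ti i * (- EV n m src dst B Xd Xd' (eta t) (V t) i + Efd i))) ->
  derivable_pt_lim (fun s => W1 n Mi (w s) wb + W2 n m src dst B Xd Xd' Efd (eta s) etab (V s) Vb) t
    (- rsum n (fun i => Ai i * (w t i - wb i) * (w t i - wb i))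
     - rsum n (fun i => gradVW2 n m src dst B Xd Xd' Efd (eta t) (V t) i * / Ti i
                        * gradVW2 n m src dst B Xd Xd' Efd (eta t) (V t) i)
     + rsum n (fun i => (w t i - wb i) * (u i - ub i))).
Proof.
  intros Hedge HBs HM Heq1 Heq2 Heta Hw HV.
  eapply derivable_pt_lim_value.
  { apply derivable_pt_lim_plus;
      [apply (derivable_pt_lim_W1 _ _ _ _ _ _ Hw)
      |apply (derivable_pt_lim_W2 _ _ _ _ _ _ _ _ _ _ _ _ _ _ _ Hedge HBs Heta HV)]. }
  (* Since D^T wb = 0, the power exchanged over the lines is the flow mismatch seen by w - wb. *)
  assert (Hlines :
    rsum m (fun k => (gam src dst B (V t) k * sin (eta t k) - gam src dst B Vb k * sin (etab k))
                     * DT n src dst (w t) k) =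
    rsum n (fun i => (w t i - wb i) * flow m src dst B (V t) (eta t) i)
    - rsum n (fun i => (w t i - wb i) * flow m src dst B Vb etab i)).
  { rewrite !rsum_mult_flow, <- rsum_minus. apply rsum_ext; intros k Hk.
    rewrite DT_minus, Heq1 by exact Hk. ring. }
  rewrite Hlines. merge_rsums. apply rsum_ext; intros i Hi.
  replace (ub i) with (flow m src dst B Vb etab i + Ai i * wb i + Pl i)
    by (pose proof (Heq2 i Hi); lra).
  (* Keeping / Ti i opaque spares the hypothesis Ti i <> 0. *)
  unfold gradVW2. set (r := / Ti i). field. apply Rgt_not_eq, HM, Hi.
Qed.

Lemma W1_nonneg n Mi w wb : (forall i, (i < n)%nat -> Mi i > 0) -> 0 <= W1 n Mi w wb.
Proof.
  intros HM. unfold W1. apply Rmult_le_pos; [lra|]. apply rsum_nonneg; intros i Hi.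
  rewrite Rmult_assoc. apply Rmult_le_pos; [left; apply HM, Hi|apply Rle_0_sqr].
Qed.

Theorem theorem1
  (n m : nat) (src dst : nat -> nat)
  (B : nat -> nat -> R) (Xd Xd' : nat -> R)
  (Mi Ai Ti : nat -> R) (Efd : nat -> R)
  (ub Pl : nat -> R)
  (etab wb Vb : nat -> R)
  (Hgraph : simple_connected_graph n m src dst)
  (HBedge : forall k, (k < m)%nat ->
     B (src k) (dst k) = B (dst k) (src k) /\ B (src k) (dst k) > 0)
  (HBii : forall i, (i < n)%nat -> B i i < 0 /\
     Rabs (B i i) > rsum m (fun k => absinc src dst i k * Rabs (B (src k) (dst k))))
  (HX : forall i, (i < n)%nat -> Xd i > Xd' i /\ Xd' i > 0)
  (HM : forall i, (i < n)%nat -> Mi i > 0)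
  (HA : forall i, (i < n)%nat -> Ai i > 0)
  (HT : forall i, (i < n)%nat -> Ti i > 0)
  (Hrange : exists z : nat -> R, forall k, (k < m)%nat -> etab k = DT n src dst z k)
  (Hetab : forall k, (k < m)%nat -> - (PI / 2) < etab k < PI / 2)
  (HVb : forall i, (i < n)%nat -> Vb i > 0)
  (Heq1 : forall k, (k < m)%nat -> DT n src dst wb k = 0)
  (Heq2 : forall i, (i < n)%nat ->
     0 = ub i - flow m src dst B Vb etab i - Ai i * wb i - Pl i)
  (Heq3 : forall i, (i < n)%nat -> 0 = - EV n m src dst B Xd Xd' etab Vb i + Efd i)
  (Hast : pos_def n (condQ n m src dst B Xd Xd' etab Vb)) :
  let U := fun (eta w V : nat -> R) =>
    W1 n Mi w wb + W2 n m src dst B Xd Xd' Efd eta etab V Vb in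
  (exists eps, eps > 0 /\
     forall eta w V : nat -> R,
       (forall k, (k < m)%nat -> Rabs (eta k - etab k) < eps) ->
       (forall i, (i < n)%nat -> Rabs (w i - wb i) < eps /\ Rabs (V i - Vb i) < eps) ->
       U eta w V >= 0) /\
  (forall (a b : R) (u : R -> nat -> R) (eta w V : R -> nat -> R),
     (forall t, a < t < b ->
        (forall k, (k < m)%nat ->
           derivable_pt_lim (fun s => eta s k) t (DT n src dst (w t) k)) /\
        (forall i, (i < n)%nat ->
           derivable_pt_lim (fun s => w s i) t
             (/ Mi i * (u t i - flow m src dst B (V t) (eta t) i - Ai i * w t i - Pl i))) /\
        (forall i, (i < n)%nat ->
           derivable_pt_lim (fun s => V s i) t
             (/ Ti i * (- EV n m src dst B Xd Xd' (eta t) (V t) i + Efd i)))) ->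
     forall t, a < t < b ->
       derivable_pt_lim (fun s => U (eta s) (w s) (V s)) t
         (- rsum n (fun i => Ai i * (w t i - wb i) * (w t i - wb i))
          - rsum n (fun i => gradVW2 n m src dst B Xd Xd' Efd (eta t) (V t) i * / Ti i
                             * gradVW2 n m src dst B Xd Xd' Efd (eta t) (V t) i)
          + rsum n (fun i => (w t i - wb i) * (u t i - ub i)))).
Proof.
  intros U. destruct Hgraph as [Hedge _].
  assert (HBs : forall k, (k < m)%nat -> B (src k) (dst k) = B (dst k) (src k))
    by (intros k Hk; apply HBedge, Hk).
  split.
  - destruct (W2_nonneg_near_equilibrium n m src dst B Xd Xd' Efd etab Vb
                Hedge HBedge Hetab HVb Heq3 Hast) as [eps [Heps HW2]].
    exists eps. split; [exact Heps|]. intros eta w V Heta HwV.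
    pose proof (W1_nonneg n Mi w wb HM).
    pose proof (HW2 eta V Heta (fun i Hi => proj2 (HwV i Hi))).
    unfold U. lra.
  - intros a b u eta w V Hsol t Ht. destruct (Hsol t Ht) as [Heta [Hw HV]].
    exact (derivable_pt_lim_storage n m src dst B Xd Xd' Mi Ai Ti Efd ub Pl etab wb Vb
             (u t) eta w V t Hedge HBs HM Heq1 Heq2 Heta Hw HV).
Qed.
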